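(* Let $(\mathcal G_A,p^A)$ and $(\mathcal G_B,p^B)$ be CPS's on the finite set $\Omega$ (satisfying the standing assumptions), each satisfying certainty reflection and being $1$-closed. Fix an event $E$ and $q_A,q_B\in[0,1]$. Then for all $n\ge0$, $A^n$ is $A$-saturated and $B^n$ is $B$-saturated; moreover $C^\infty$ is both $A$-saturated and $B$-saturated.
   Context: $\Omega$ is a finite set; every subset is an event. A CPS is a pair $(\mathcal G,p)$ where $\mathcal G$ is a family of nonempty subsets of $\Omega$ and $p$ assigns to each $G\in\mathcal G$ a probability measure $p_G$ on $\Omega$ with $p_G(G)=1$ and $p_G(E)=p_G(F)p_F(E)$ whenever $E\subseteq F\subseteq G$, $F,G\in\mathcal G$. Standing assumption: each conditioning family is closed under unions and nonempty intersections and covers $\Omega$. Atom: $m_i(\omega)=\bigcap\{G\in\mathcal G_i:\omega\in G\}$. $(\mathcal G_i,p^i)$ is $1$-closed if every $L\subseteq G$ with $G\in\mathcal G_i$ and $p^i_G(L)=1$ belongs to $\mathcal G_i$. Certainty reflection: for every event $E$, $q\in[0,1]$, $\omega$: $p^i_{m_i(\omega)}(E)=q$ implies $p^i_{m_i(\omega)}(\{\omega':p^i_{m_i(\omega')}(E)=q\})=1$. An event $F$ is $i$-saturated if $\omega\in F$ implies $m_i(\omega)\subseteq F$. $C_i(F)=\{\omega:p^i_{m_i(\omega)}(F)=1\}$. $A^0=\{\omega:p^A_{m_A(\omega)}(E)=q_A\}$, $B^0=\{\omega:p^B_{m_B(\omega)}(E)=q_B\}$, $A^{n+1}=A^n\cap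 C_A(B^n)$, $B^{n+1}=B^n\cap C_B(A^n)$, $C^\infty=\bigcap_{n\ge0}A^n\cap\bigcap_{n\ge0}B^n$. *)

(* A probability measure on the finite set Omega is given by its
   point masses: p G : T -> R, and p_G(E) = \sum_(x in E) p G x. *)
From HB Require Import structures.
From mathcomp Require Import all_boot all_order all_algebra.
Set Implicit Arguments. Unset Strict Implicit. Unset Printing Implicit Defensive.
Import Order.TTheory GRing.Theory Num.Theory.
Local Open Scope ring_scope.

Section CPS.
Variables (R : realFieldType) (T : finType).

Definition prob (p : {set T} -> T -> R) (G E : {set T}) : R :=
  \sum_(x in E) p G x.

Definition is_cps (fam : {set {set T}}) (p : {set T} -> T -> R) : Prop :=
  [/\ (forall G, G \in fam -> G != set0),
      (forall G, G \in fam -> (forall x, 0 <= p G x) /\ \sum_x p G x = 1),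
      (forall G, G \in fam -> prob p G G = 1) &
      (forall E F G : {set T}, F \in fam -> G \in fam -> E \subset F -> F \subset G ->
         prob p G E = prob p G F * prob p F E)].

Definition standing (fam : {set {set T}}) : Prop :=
  [/\ (forall G H, G \in fam -> H \in fam -> G :|: H \in fam),
      (forall G H, G \in fam -> H \in fam -> G :&: H != set0 -> G :&: H \in fam) &
      (forall w : T, exists2 G, G \in fam & w \in G)].

Definition atom (fam : {set {set T}}) (w : T) : {set T} :=
  \bigcap_(G in fam | w \in G) G.

Definition one_closed (fam : {set {set T}}) (p : {set T} -> T -> R) : Prop :=
  forall G L : {set T}, G \in fam -> L \subset G -> prob p G L = 1 -> L \in fam.

Definition certainty_reflection (fam : {set {set T}}) (p : {set T} -> T -> R)
  : Prop :=
  forall (E : {set T}) (q : R) (w : T),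
    0 <= q <= 1 ->
    prob p (atom fam w) E = q ->
    prob p (atom fam w) [set w' | prob p (atom fam w') E == q] = 1.

Definition saturatedP (fam : {set {set T}}) (P : T -> Prop) : Prop :=
  forall w, P w -> forall w', w' \in atom fam w -> P w'.

Definition saturated (fam : {set {set T}}) (F : {set T}) : Prop :=
  saturatedP fam (fun w => w \in F).

Definition certain (fam : {set {set T}}) (p : {set T} -> T -> R) (F : {set T})
  : {set T} := [set w | prob p (atom fam w) F == 1].

Fixpoint AB (famA famB : {set {set T}}) (pA pB : {set T} -> T -> R)
  (E : {set T}) (qA qB : R) (n : nat) : {set T} * {set T} :=
  match n with
  | 0 => ([set w | prob pA (atom famA w) E == qA],
          [set w | prob pB (atom famB w) E == qB])
  | n'.+1 => let: (a, b) := AB famA famB pA pB E qA qB n' in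
             (a :&: certain famA pA b, b :&: certain famB pB a)
  end.

Definition Cinf (famA famB : {set {set T}}) (pA pB : {set T} -> T -> R)
  (E : {set T}) (qA qB : R) (w : T) : Prop :=
  forall n, w \in (AB famA famB pA pB E qA qB n).1 /\
            w \in (AB famA famB pA pB E qA qB n).2.

End CPS.

(* Under 1-closedness the atom m(w) is the smallest member of the family
   containing w, so [p_{m(w)}(S) = 1] together with [w \in S] forces
   [m(w) \subset S]. Certainty reflection says exactly that each level set
   [{w | p_{m(w)}(E) = q}] is certain at its own points, hence saturated;
   saturation is preserved by intersection, and the conjunct [C_A(B^n)]
   of [A^(n+1)] carries [B^n] (which contains [w] when [w] is in [C^\infty])
   over the whole [A]-atom of [w]. *)
From HB Require Import structures.
From mathcomp Require Import all_boot all_order all_algebra.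
Import Order.TTheory GRing.Theory Num.Theory.
Set Implicit Arguments. Unset Strict Implicit. Unset Printing Implicit Defensive.
Local Open Scope ring_scope.

Section Atoms.
Variables (R : realFieldType) (T : finType).
Variables (fam : {set {set T}}) (p : {set T} -> T -> R).

Lemma mem_atom w : w \in atom fam w.
Proof. by apply/bigcapP => G /andP[]. Qed.

Lemma atom_min G w : G \in fam -> w \in G -> atom fam w \subset G.
Proof. by move=> GF wG; apply: bigcap_inf; rewrite GF. Qed.

Lemma atom_in_fam w : standing fam -> atom fam w \in fam.
Proof.
case=> _ famI /(_ w) [G0 G0F wG0].
have famI_w X Y : X \in fam -> Y \in fam -> w \in X -> w \in Y -> X :&: Y \in fam.
  by move=> XF YF wX wY; apply: famI => //; apply/set0Pn; exists w; rewrite inE wX.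
(* [atom] is a [\bigcap] whose empty case is [setT], possibly not in [fam];
   intersecting with a member [G0] containing [w] sidesteps it. *)
suff [_ ] : w \in atom fam w /\ G0 :&: atom fam w \in fam.
  by rewrite (setIidPr (atom_min G0F wG0)).
rewrite /atom; apply: (big_ind (fun X : {set T} => w \in X /\ G0 :&: X \in fam)).
- by rewrite inE setIT.
- move=> X Y [wX G0XF] [wY G0YF]; split; first by rewrite inE wX.
  rewrite -[G0 in G0 :&: _]setIid setIACA.
  by apply: famI_w; rewrite // inE wG0.
- by move=> G /andP[GF wG]; split=> //; apply: famI_w.
Qed.

Lemma saturatedI (X Y : {set T}) :
  saturated fam X -> saturated fam Y -> saturated fam (X :&: Y).
Proof.
move=> satX satY w /setIP[wX wY] w' w'w.
by rewrite inE (satX w wX w' w'w) (satY w wY w' w'w).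
Qed.

Hypothesis cps : is_cps fam p.

Lemma cps_mass_out G x : G \in fam -> x \notin G -> p G x = 0.
Proof.
case: cps => _ mass probG _ GF xG.
have [mass_ge0 mass_sum] := mass G GF.
move: mass_sum; rewrite (bigID (mem G)) /= -/(prob p G G) probG // => /eqP.
by rewrite -subr_eq0 addrC addrK => /eqP /psumr_eq0P; apply.
Qed.

Lemma prob_setIl G S : G \in fam -> prob p G (G :&: S) = prob p G S.
Proof.
move=> GF; rewrite /prob [RHS](bigID (mem G)) /=.
rewrite [X in _ = _ + X]big1 ?addr0; last first.
  by move=> x /andP[_]; apply: cps_mass_out.
by apply: eq_bigl => x; rewrite inE andbC.
Qed.

Hypotheses (stand : standing fam) (closed1 : one_closed fam p).

Lemma atom_sub_certain (S : {set T}) w :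
  w \in S -> w \in certain fam p S -> atom fam w \subset S.
Proof.
rewrite inE => wS /eqP probS.
have atomF := atom_in_fam w stand.
have atomSF : atom fam w :&: S \in fam.
  by apply: (closed1 atomF); rewrite ?subsetIl ?prob_setIl.
apply: subset_trans (subsetIr (atom fam w) S).
by apply: atom_min; rewrite // inE mem_atom.
Qed.

Hypothesis reflect1 : certainty_reflection fam p.

Lemma level_saturated F q :
  0 <= q <= 1 -> saturated fam [set w | prob p (atom fam w) F == q].
Proof.
move=> q01 w wq; apply/subsetP; apply: atom_sub_certain => //.
by rewrite inE; apply/eqP; apply: reflect1 => //; apply/eqP; rewrite inE in wq.
Qed.

End Atoms.

Section Iteration.
Variables (R : realFieldType) (T : finType).
Variables (famA famB : {set {set T}}) (pA pB : {set T} -> T -> R).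
Variables (E : {set T}) (qA qB : R).

Local Notation AB := (AB famA famB pA pB E qA qB).

Lemma AB_S n :
  AB n.+1 = ((AB n).1 :&: certain famA pA (AB n).2,
             (AB n).2 :&: certain famB pB (AB n).1).
Proof. by rewrite /=; case: (AB n). Qed.

Lemma Cinf_certain w n : Cinf famA famB pA pB E qA qB w ->
  w \in certain famA pA (AB n).2 /\ w \in certain famB pB (AB n).1.
Proof. by move=> /(_ n.+1); rewrite AB_S => -[/setIP[_ ->] /setIP[_ ->]]. Qed.

End Iteration.

Theorem lemma3 (R : realFieldType) (T : finType)
  (famA famB : {set {set T}}) (pA pB : {set T} -> T -> R)
  (E : {set T}) (qA qB : R) :
  is_cps famA pA -> standing famA ->
  certainty_reflection famA pA -> one_closed famA pA ->
  is_cps famB pB -> standing famB ->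
  certainty_reflection famB pB -> one_closed famB pB ->
  0 <= qA <= 1 -> 0 <= qB <= 1 ->
  (forall n : nat,
     saturated famA (AB famA famB pA pB E qA qB n).1 /\
     saturated famB (AB famA famB pA pB E qA qB n).2) /\
  saturatedP famA (Cinf famA famB pA pB E qA qB) /\
  saturatedP famB (Cinf famA famB pA pB E qA qB).
Proof.
move=> cA sA rA oA cB sB rB oB qA01 qB01.
have q1 : 0 <= (1 : R) <= 1 by rewrite ler01 lexx.
have satAB n : saturated famA (AB famA famB pA pB E qA qB n).1 /\
               saturated famB (AB famA famB pA pB E qA qB n).2.
  elim: n => [|n [satA satB]]; first by split; apply: level_saturated.
  by rewrite AB_S; split; apply: saturatedI => //; apply: level_saturated.
split=> //; split=> w wC w' w'w n; have [wA wB] := wC n;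
  have [cAw cBw] := Cinf_certain n wC; split.
- exact: (satAB n).1 w wA w' w'w.
- exact: subsetP (atom_sub_certain cA sA oA wB cAw) w' w'w.
- exact: subsetP (atom_sub_certain cB sB oB wA cBw) w' w'w.
- exact: (satAB n).2 w wB w' w'w.
Qed.
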